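(* Let $N\ge2$. Equip the space of real symmetric $N\times N$ matrices with the inner product $\langle A|B\rangle=\operatorname{Tr}(AB)$ and norm $\|A\|=\sqrt{\langle A|A\rangle}$, and write $\hat A=A-\mathbb{1}_N$. (i) Every Ising matrix $\boldsymbol\gamma\in\mathcal{I}$ satisfies $\|\hat{\boldsymbol\gamma}\|=\sqrt{N(N-1)}$. (ii) For $0\le k\le\lfloor N/2\rfloor$ and every $\boldsymbol\gamma\in\mathcal{I}_k$, $\langle\hat{\boldsymbol\gamma}|\hat A_0\rangle=(N-2k)^2-N$. (iii) For every $\boldsymbol\gamma\in\mathcal{I}_k$, $\|\boldsymbol\gamma-A_0\|=2\sqrt{2k(N-k)}$. (iv) The barycenter $B_k=\frac{1}{|\mathcal{I}_k|}\sum_{\boldsymbol\gamma\in\mathcal{I}_k}\boldsymbol\gamma$ satisfies $B_k=\Bigl(1-\frac{4k(N-k)}{N(N-1)}\Bigr)A_0+\frac{4k(N-k)}{N(N-1)}\mathbb{1}_N$.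
   Context: An Ising matrix is a matrix $\mathbf{s}\mathbf{s}^\top$ with $\mathbf{s}\in\{+1,-1\}^N$ (a column vector); $\mathcal{I}$ is the set of all Ising matrices (the rank-one elements of the set of positive semi-definite symmetric $N\times N$ matrices with unit diagonal). For $\mathcal{K}\subseteq\{1,\ldots,N\}$, $A_{\mathcal K}$ denotes the Ising matrix of the vector with $s_\mu=-1$ for $\mu\in\mathcal K$ and $s_\mu=+1$ otherwise; $A_0=A_\emptyset$ is the all-ones matrix. For $0\le k\le\lfloor N/2\rfloor$, $\mathcal{I}_k=\{A_{\mathcal K}:|\mathcal K|=k\}$ (as a set of matrices). $\mathbb{1}_N$ is the identity matrix. *)

From HB Require Import structures.
From mathcomp Require Import all_boot all_order all_algebra.
Set Implicit Arguments. Unset Strict Implicit. Unset Printing Implicit Defensive.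
Import Order.TTheory GRing.Theory Num.Theory.
Local Open Scope ring_scope.

Section IsingDefs.
Variables (R : rcfType) (N : nat).

Definition ip (A B : 'M[R]_N) : R := \tr (A *m B).
Definition mnorm (A : 'M[R]_N) : R := Num.sqrt (ip A A).

Definition hat (A : 'M[R]_N) : 'M[R]_N := A - 1%:M.

Definition is_ising (A : 'M[R]_N) : Prop :=
  exists s : 'cV[R]_N, (forall i, s i 0 = 1 \/ s i 0 = -1) /\ A = s *m s^T.

Definition sgnvec (K : {set 'I_N}) : 'cV[R]_N :=
  \col_i (if i \in K then -1 else 1).
Definition AK (K : {set 'I_N}) : 'M[R]_N := sgnvec K *m (sgnvec K)^T.
Definition A0 : 'M[R]_N := AK set0.

Definition Ik (k : nat) : seq 'M[R]_N :=
  undup [seq AK K | K <- enum [set K : {set 'I_N} | #|K| == k]].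

Definition bary (k : nat) : 'M[R]_N :=
  (size (Ik k))%:R^-1 *: \sum_(g <- Ik k) g.

End IsingDefs.

From HB Require Import structures.
From mathcomp Require Import all_boot all_order all_fingroup all_algebra.
From mathcomp Require Import ring.

(* A_K = s s^T has entries s_i s_j with s_i = -1 exactly on K, so
   <s s^T | t t^T> = (s.t)^2 and Tr (s s^T) = s.s = N, while s.1 = N - 2|K|;
   parts (i)-(iii) follow by expanding the bilinear form.
   For the barycenter, A_K = A_K' only when K' is K or its complement, so all
   matrices of I_k occur equally often among the A_K with |K| = k and B_k is
   the mean S / C(N,k) of these A_K.  S is invariant under simultaneous
   permutations of rows and columns and has diagonal C(N,k), hence
   S = a A_0 + (C(N,k) - a) 1; pairing with A_0 gives
   a N^2 + (C(N,k) - a) N = C(N,k) (N - 2k)^2, which determines a. *)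

Set Implicit Arguments.
Unset Strict Implicit.
Unset Printing Implicit Defensive.

Import Order.TTheory GRing.Theory Num.Theory.
Local Open Scope ring_scope.

Lemma mean_undup (F : numFieldType) (V : lmodType F) (T : eqType)
    (s : seq T) (f : T -> V) (m : nat) :
  (0 < m)%N -> {in s, forall x, count_mem x s = m} ->
  (size (undup s))%:R^-1 *: \sum_(x <- undup s) f x
  = (size s)%:R^-1 *: \sum_(x <- s) f x.
Proof.
move=> m_gt0 count_s.
have sum_s (W : nmodType) (g : T -> W) :
    \sum_(x <- s) g x = (\sum_(x <- undup s) g x) *+ m.
  rewrite -big_undup_iterop_count -sumrMnl big_seq [RHS]big_seq.
  apply: eq_bigr => x; rewrite mem_undup => /count_s ->.
  by rewrite Monoid.iteropE iter_addr_0.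
have size_s r : (size r)%:R = \sum_(x <- r) 1 :> F.
  by rewrite big_const_seq count_predT iter_addr_0.
rewrite (sum_s V f) (size_s _ s) (sum_s F (fun=> 1)) -size_s.
rewrite -scaler_nat scalerA -(mulr_natr (size (undup s))%:R) invfM -mulrA.
by rewrite mulVf ?mulr1 // pnatr_eq0 -lt0n.
Qed.

Lemma perm_2transitive n (i0 j0 i j : 'I_n) :
  i0 != j0 -> i != j -> exists p : 'S_n, p i0 = i /\ p j0 = j.
Proof.
move=> ij0 ij; pose q := tperm i0 i.
have qj0_neq_i : q j0 != i by rewrite -[i](tpermL i0) (inj_eq perm_inj) eq_sym.
exists (q * tperm (q j0) j)%g.
by rewrite !permM tpermL tpermD ?tpermL // eq_sym.
Qed.

Lemma perm_invariant_mx (R : pzRingType) n (A : 'M[R]_n) (i0 j0 : 'I_n) :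
  i0 != j0 -> (forall (p : 'S_n) i j, A (p i) (p j) = A i j) ->
  A = A i0 j0 *: const_mx 1 + (A i0 i0 - A i0 j0) *: 1%:M.
Proof.
move=> ij0 A_inv; apply/matrixP => i j; rewrite !mxE mulr1.
case: eqVneq => [<-|ij].
  by rewrite -(A_inv (tperm i0 i) i0 i0) tpermL /= mulr1 addrC subrK.
have [p [<- <-]] := perm_2transitive ij0 ij.
by rewrite A_inv /= mulr0 addr0.
Qed.

Section IsingMatrices.
Variables (R : rcfType) (N : nat).
Implicit Types (A B C : 'M[R]_N) (u v : 'cV[R]_N) (K : {set 'I_N}).

Local Notation ip := (@ip R N).
Local Notation sgnvec := (@sgnvec R N).
Local Notation AK := (@AK R N).
Local Notation A0 := (@A0 R N).
Local Notation Ik := (@Ik R N).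
Local Notation bary := (@bary R N).

Lemma ipE A B : ip A B = \sum_i \sum_j A i j * B j i.
Proof. by apply: eq_bigr => i _; rewrite mxE. Qed.

Lemma ipC A B : ip A B = ip B A.
Proof. exact: mxtrace_mulC. Qed.

Lemma ipBl A B C : ip (A - B) C = ip A C - ip B C.
Proof. by rewrite /ip mulmxBl raddfB. Qed.

Lemma ipBr A B C : ip A (B - C) = ip A B - ip A C.
Proof. by rewrite /ip mulmxBr raddfB. Qed.

Lemma ipDl A B C : ip (A + B) C = ip A C + ip B C.
Proof. by rewrite /ip mulmxDl mxtraceD. Qed.

Lemma ipZl a A B : ip (a *: A) B = a * ip A B.
Proof. by rewrite /ip -scalemxAl mxtraceZ. Qed.

Lemma ip1mx A : ip 1%:M A = \tr A.
Proof. by rewrite /ip mul1mx. Qed.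

Lemma ip_hat A B : ip (hat A) (hat B) = ip A B - \tr A - \tr B + N%:R.
Proof.
by rewrite /hat ipBl !ipBr !ip1mx /ip mulmx1 mxtrace1; ring.
Qed.

Lemma rank1E u i j : (u *m u^T) i j = u i 0 * u j 0.
Proof. by rewrite !mxE big_ord1 mxE. Qed.

Lemma mxtrace_rank1 u : \tr (u *m u^T) = \sum_i u i 0 ^+ 2.
Proof. by apply: eq_bigr => i _; rewrite rank1E. Qed.

Lemma ip_rank1 u v : ip (u *m u^T) (v *m v^T) = (\sum_i u i 0 * v i 0) ^+ 2.
Proof.
rewrite ipE expr2 mulr_suml; apply: eq_bigr => i _.
rewrite mulr_sumr; apply: eq_bigr => j _; rewrite !rank1E; ring.
Qed.

Section SignVector.
Variable u : 'cV[R]_N.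
Hypothesis u_sign : forall i, u i 0 ^+ 2 = 1.

Lemma mxtrace_sign_rank1 : \tr (u *m u^T) = N%:R.
Proof.
by rewrite mxtrace_rank1 (eq_bigr _ (fun i _ => u_sign i)) sumr_const card_ord.
Qed.

Lemma ip_sign_rank1 : ip (u *m u^T) (u *m u^T) = N%:R ^+ 2.
Proof.
rewrite ip_rank1 (eq_bigr _ (fun i _ => esym (expr2 _))) -mxtrace_rank1.
by rewrite mxtrace_sign_rank1.
Qed.

Lemma ip_hat_sign_rank1 :
  ip (hat (u *m u^T)) (hat (u *m u^T)) = N%:R * (N%:R - 1).
Proof. by rewrite ip_hat ip_sign_rank1 mxtrace_sign_rank1; ring. Qed.

End SignVector.

Lemma sgnvecE K i : sgnvec K i 0 = (-1) ^+ (i \in K).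
Proof. by rewrite mxE; case: (i \in K). Qed.

Lemma sgnvec_sign K i : sgnvec K i 0 ^+ 2 = 1.
Proof. by rewrite sgnvecE sqrr_sign. Qed.

Lemma sum_sgnvec K : \sum_i sgnvec K i 0 = N%:R - 2 * #|K|%:R.
Proof.
have sgnvec_nat i : sgnvec K i 0 = 1 - 2 * (i \in K)%:R.
  by rewrite sgnvecE; case: (i \in K) => /=; ring.
rewrite (eq_bigr _ (fun i _ => sgnvec_nat i)) sumrB sumr_const card_ord.
rewrite -mulr_sumr -natr_sum -sum1_card [in RHS]big_mkcond.
by congr (_ - 2 * _%:R); apply: eq_bigr => i _; case: (i \in K).
Qed.

Lemma AKE K i j : AK K i j = (-1) ^+ ((i \in K) (+) (j \in K)).
Proof. by rewrite rank1E !sgnvecE signr_addb. Qed.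

Lemma A0_const : A0 = const_mx 1.
Proof. by apply/matrixP => i j; rewrite AKE !in_set0 mxE. Qed.

Lemma ip_AK_A0 K : ip (AK K) A0 = (N%:R - 2 * #|K|%:R) ^+ 2.
Proof.
rewrite ip_rank1 -sum_sgnvec; congr (_ ^+ 2); apply: eq_bigr => i _.
by rewrite [sgnvec set0 i 0]sgnvecE in_set0 mulr1.
Qed.

Lemma ip_hat_AK_A0 K :
  ip (hat (AK K)) (hat A0) = (N%:R - 2 * #|K|%:R) ^+ 2 - N%:R.
Proof.
by rewrite ip_hat ip_AK_A0 !mxtrace_sign_rank1 //; [ring | exact: sgnvec_sign..].
Qed.

Lemma ip_AK_sub_A0 K :
  ip (AK K - A0) (AK K - A0) = 8 * #|K|%:R * (N%:R - #|K|%:R).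
Proof.
rewrite ipBl !ipBr [ip A0 (AK K)]ipC ip_AK_A0 !ip_sign_rank1;
  [ring | exact: sgnvec_sign..].
Qed.

Lemma AK_setC K : AK (~: K) = AK K.
Proof. by apply/matrixP => i j; rewrite !AKE !in_setC addbN addNb negbK. Qed.

Lemma AK_inj_setC (i0 : 'I_N) K K' : AK K = AK K' -> K = K' \/ K = ~: K'.
Proof.
move=> eq_AK.
have memK i : (i \in K) = (i \in K') (+) ((i0 \in K) (+) (i0 \in K')).
  have := congr1 (fun A => A i i0) eq_AK; rewrite !AKE => /signr_inj.
  by case: (i \in K) (i0 \in K) (i \in K') (i0 \in K') => [] [] [] [].
case: ((i0 \in K) (+) (i0 \in K')) memK => memK; [right | left];
  by apply/setP => i; rewrite memK ?inE (addbT, addbF).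
Qed.

Lemma count_mem_AK (i0 : 'I_N) k K0 : #|K0| = k ->
  count_mem (AK K0) [seq AK K | K <- enum [set K : {set 'I_N} | #|K| == k]]
  = (1 + (N - k == k))%N.
Proof.
move=> card_K0; rewrite count_map.
have K0_neq_C : K0 != ~: K0.
  by apply/eqP => /setP /(_ i0); rewrite in_setC; case: (i0 \in K0).
have preim_AK : preim AK (pred1 (AK K0)) =1 predU (pred1 K0) (pred1 (~: K0)).
  move=> K /=; apply/eqP/orP => [/(AK_inj_setC i0) [] -> | [] /eqP ->].
  - by left.
  - by right.
  - by [].
  - exact: AK_setC.
set Ks := enum _.
have count_K0_C : count (predI (pred1 K0) (pred1 (~: K0))) Ks = 0%N.
  rewrite (@eq_count _ _ pred0) ?count_pred0 // => K /=.
  by apply/andP => -[/eqP -> /eqP/eqP]; rewrite (negbTE K0_neq_C).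
have card_C : #|~: K0| = (N - k)%N.
  by rewrite cardsCs setCK card_ord card_K0.
have := count_predUI (pred1 K0) (pred1 (~: K0)) Ks.
rewrite count_K0_C addn0 (eq_count preim_AK) => ->.
by rewrite !count_uniq_mem ?enum_uniq // !mem_enum !inE card_K0 card_C eqxx.
Qed.

Definition AKsum k : 'M[R]_N := \sum_(K in [set K : {set 'I_N} | #|K| == k]) AK K.

Lemma bary_AKsum (i0 : 'I_N) k : bary k = 'C(N, k)%:R^-1 *: AKsum k.
Proof.
rewrite /bary /Ik (@mean_undup _ _ _ _ _ (1 + (N - k == k))%N) //.
  by rewrite size_map -cardE card_draws card_ord big_map big_enum.
by move=> g /mapP [K]; rewrite mem_enum inE => /eqP card_K ->; exact: count_mem_AK.
Qed.

Lemma AK_perm (p : 'S_N) K i j : AK (p @: K) (p i) (p j) = AK K i j.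
Proof. by rewrite !AKE !mem_imset //; exact: perm_inj. Qed.

Lemma AKsum_perm k (p : 'S_N) i j : AKsum k (p i) (p j) = AKsum k i j.
Proof.
rewrite !summxE (reindex_inj (imset_inj (@perm_inj _ p))) /=.
apply: eq_big => [K | K _]; last exact: AK_perm.
by rewrite !inE card_imset //; exact: perm_inj.
Qed.

Lemma AKsum_diag k i : AKsum k i i = 'C(N, k)%:R.
Proof.
rewrite summxE (eq_bigr (fun=> 1)) => [|K _]; last by rewrite AKE addbb.
by rewrite sumr_const card_draws card_ord.
Qed.

Lemma ip_AKsum_A0 k : ip (AKsum k) A0 = 'C(N, k)%:R * (N%:R - 2 * k%:R) ^+ 2.
Proof.
rewrite /ip mulmx_suml raddf_sum (eq_bigr (fun=> (N%:R - 2 * k%:R) ^+ 2)).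
  by rewrite sumr_const card_draws card_ord [RHS]mulr_natl.
by move=> K; rewrite inE => /eqP <-; exact: ip_AK_A0.
Qed.

Lemma baryE k : (2 <= N)%N -> (k <= N)%N ->
  bary k = (1 - 4 * k%:R * (N%:R - k%:R) / (N%:R * (N%:R - 1))) *: A0
           + (4 * k%:R * (N%:R - k%:R) / (N%:R * (N%:R - 1))) *: 1%:M.
Proof.
move=> N_ge2 k_le_N; have N_gt0 : (0 < N)%N := ltnW N_ge2.
pose i0 : 'I_N := Ordinal N_gt0; pose j0 : 'I_N := Ordinal N_ge2.
have i0_neq_j0 : i0 != j0 by [].
set C : R := 'C(N, k)%:R; set a := AKsum k i0 j0.
have AKsumE : AKsum k = a *: A0 + (C - a) *: 1%:M.
  by rewrite A0_const {1}(perm_invariant_mx i0_neq_j0 (AKsum_perm k)) AKsum_diag.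
have ip_eq : a * N%:R ^+ 2 + (C - a) * N%:R = C * (N%:R - 2 * k%:R) ^+ 2.
  rewrite -ip_AKsum_A0 AKsumE ipDl !ipZl ip1mx.
  by rewrite ip_sign_rank1 ?mxtrace_sign_rank1 //; exact: sgnvec_sign.
have N_neq0 : N%:R != 0 :> R by rewrite pnatr_eq0 -lt0n.
have N1_neq0 : N%:R - 1 != 0 :> R by rewrite subr_eq0 pnatr_eq1 gtn_eqF.
have C_neq0 : C != 0 by rewrite pnatr_eq0 -lt0n bin_gt0.
have a_eq : a = C * ((N%:R - 2 * k%:R) ^+ 2 - N%:R) / (N%:R * (N%:R - 1)).
  apply: (mulIf (mulf_neq0 N_neq0 N1_neq0)); rewrite divfK ?mulf_neq0 //.
  by rewrite [RHS]mulrBr -ip_eq; ring.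
rewrite (bary_AKsum i0) AKsumE scalerDr !scalerA a_eq.
by congr (_ *: _ + _ *: _); field; rewrite ?N_neq0 ?N1_neq0 ?C_neq0.
Qed.

Lemma mnorm_hat_ising (g : 'M[R]_N) :
  is_ising g -> mnorm (hat g) = Num.sqrt (N%:R * (N%:R - 1)).
Proof.
move=> [s [s_sign ->]]; rewrite /mnorm ip_hat_sign_rank1 // => i.
by case: (s_sign i) => ->; rewrite ?sqrrN expr1n.
Qed.

Lemma mnorm_AK_sub_A0 K :
  mnorm (AK K - A0) = 2 * Num.sqrt (2 * #|K|%:R * (N%:R - #|K|%:R)).
Proof.
rewrite /mnorm ip_AK_sub_A0.
have -> : 8 * #|K|%:R * (N%:R - #|K|%:R)
          = 2 ^+ 2 * (2 * #|K|%:R * (N%:R - #|K|%:R)) :> R by ring.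
by rewrite sqrtrM ?sqr_ge0 // sqrtr_sqr ger0_norm.
Qed.

Lemma mem_Ik k (g : 'M[R]_N) :
  g \in Ik k -> exists2 K : {set 'I_N}, #|K| = k & g = AK K.
Proof.
rewrite mem_undup => /mapP [K].
by rewrite mem_enum inE => /eqP card_K ->; exists K.
Qed.

End IsingMatrices.

Theorem proposition1 (R : rcfType) (N : nat) (HN : (2 <= N)%N) :
  (forall g : 'M[R]_N, is_ising g ->
     mnorm (hat g) = Num.sqrt (N%:R * (N%:R - 1))) /\
  (forall k : nat, (k <= N./2)%N -> forall g : 'M[R]_N, g \in @Ik R N k ->
     ip (hat g) (hat (@A0 R N)) = (N%:R - 2 * k%:R) ^+ 2 - N%:R) /\
  (forall k : nat, (k <= N./2)%N -> forall g : 'M[R]_N, g \in @Ik R N k ->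
     mnorm (g - @A0 R N) = 2 * Num.sqrt (2 * k%:R * (N%:R - k%:R))) /\
  (forall k : nat, (k <= N./2)%N ->
     @bary R N k =
       (1 - 4 * k%:R * (N%:R - k%:R) / (N%:R * (N%:R - 1))) *: @A0 R N
       + (4 * k%:R * (N%:R - k%:R) / (N%:R * (N%:R - 1))) *: 1%:M).
Proof.
split; [exact: mnorm_hat_ising | split; [|split]].
- by move=> k _ g /mem_Ik [K <- ->]; exact: ip_hat_AK_A0.
- by move=> k _ g /mem_Ik [K <- ->]; exact: mnorm_AK_sub_A0.
- move=> k; rewrite geq_half_double -addnn => k_le_half; apply: baryE => //.
  exact: leq_trans (leq_addl _ _) k_le_half.
Qed.
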